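(* Let $N\ge1$, $K\ge2$ be integers with $K$ even and $N$ divisible by $K$, and consider the constant-sum game $\mathcal{B}_1(N,K)$. A pure strategy $s\in S$ is used with positive probability in some Nash equilibrium of $\mathcal{B}_1(N,K)$ (i.e., there exist a Nash equilibrium $(\sigma^A,\sigma^B)$ and a player $i$ with $\sigma^i(s)>0$) if and only if $s_k\le 2N/K$ for every battlefield $k\in\{1,\ldots,K\}$.
   Context: Fix integers $N\ge1$, $K\ge2$ and a real number $\alpha$. The Colonel Blotto game $\mathcal{B}_\alpha(N,K)$ is the two-player simultaneous-move game with players $A,B$, each with pure strategy set $S=\{s\in\{0,1,\ldots,N\}^K:\sum_{k=1}^K s_k=N\}$, in which the payoff of player $i$ at the pure profile $(s^i,s^{-i})$ is $\pi^i(s^i,s^{-i})=\sum_{k=1}^K\big(\mathbf 1[s^i_k>s^{-i}_k]+\tfrac{\alpha}{2}\mathbf 1[s^i_k=s^{-i}_k]\big)$. For $\alpha=1$ the payoffs of the two players always sum to $K$. Mixed strategies are probability distributions on $S$, with expected payoffs under independent randomization; a Nash equilibrium is a mixed profile from which no unilateral deviation raises a player's expected payoff. *)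

From HB Require Import structures.
From mathcomp Require Import all_boot all_order all_algebra.
From mathcomp Require Import reals.
Set Implicit Arguments. Unset Strict Implicit. Unset Printing Implicit Defensive.
Import Order.TTheory GRing.Theory Num.Theory.
Local Open Scope ring_scope.

(* Pure strategies of the Colonel Blotto game B(N,K): allocations
   s : {1..K} -> {0..N} with sum_k s_k = N. Battlefield k is index k-1. *)
Definition strat (N K : nat) : finType :=
  {f : {ffun 'I_K -> 'I_N.+1} | (\sum_(k < K) (f k : nat) == N)%N}.

Definition alloc N K (s : strat N K) (k : 'I_K) : nat := (val s) k.

Definition payoff (R : realType) (alpha : R) N K (s s' : strat N K) : R :=
  \sum_(k < K) (((alloc s' k < alloc s k)%N)%:R
                + alpha / 2%:R * ((alloc s k == alloc s' k))%:R).

Definition is_mixed (R : realType) N K (p : {ffun strat N K -> R}) : Prop :=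
  (forall s, 0 <= p s) /\ \sum_s p s = 1.

Definition exp_payA (R : realType) (alpha : R) N K
  (pA pB : {ffun strat N K -> R}) : R :=
  \sum_s \sum_t pA s * pB t * payoff alpha s t.

Definition exp_payB (R : realType) (alpha : R) N K
  (pA pB : {ffun strat N K -> R}) : R :=
  \sum_s \sum_t pA s * pB t * payoff alpha t s.

Definition nash (R : realType) (alpha : R) N K (pA pB : {ffun strat N K -> R}) : Prop :=
  [/\ is_mixed pA, is_mixed pB,
      (forall qA, is_mixed qA -> exp_payA alpha qA pB <= exp_payA alpha pA pB) &
      (forall qB, is_mixed qB -> exp_payB alpha pA qB <= exp_payB alpha pA pB)].

From HB Require Import structures.
From mathcomp Require Import all_boot all_order all_algebra.
From mathcomp Require Import reals.
From mathcomp Require Import zify ring lra.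
Import Order.TTheory GRing.Theory Num.Theory.
Local Open Scope ring_scope.
Set Implicit Arguments. Unset Strict Implicit. Unset Printing Implicit Defensive.

(* Write K = 2h and M = 2N/K, so that N = hM, and pair battlefield j with
   battlefield h + j.  A mixed strategy that puts (x, M - x) on every pair,
   with the x's rotated simultaneously and uniformly in Z/(M+1), has every
   marginal uniform on [0, M].  Against it an allocation c wins on average
   (c + 1/2)/(M+1) on a battlefield when c <= M and strictly less when c > M,
   so the total payoff is at most (N + K/2)/(M+1) = K/2, with equality iff all
   allocations are at most M.  As the game is constant-sum with value K/2,
   this mixture played by both players is an equilibrium, and a pure strategy
   doing strictly worse than K/2 against it is never played in any
   equilibrium.  Conversely, if s is bounded by M, replacing two unrotated
   members of such a family by s and its dual (M - s with the halves swapped)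
   preserves the marginals and gives an equilibrium that plays s. *)

Section Strategies.
Variables N K : nat.

Lemma sum_alloc (t : strat N K) : (\sum_k alloc t k)%N = N.
Proof. by case: t => f /= sum_f; apply/eqP. Qed.

Section Build.
Variables (f : 'I_K -> nat) (sum_f : (\sum_k f k)%N = N).

Lemma leq_summand k : (f k <= N)%N.
Proof. by rewrite -sum_f (bigD1 k) //= leq_addr. Qed.

Lemma mkstrat_subproof :
  (\sum_k ([ffun k => inord (f k) : 'I_N.+1] k : nat) == N)%N.
Proof.
rewrite -sum_f; apply/eqP/eq_bigr => k _.
by rewrite ffunE inordK // ltnS sum_f leq_summand.
Qed.

Definition mkstrat : strat N K :=
  exist (fun g : {ffun 'I_K -> 'I_N.+1} => \sum_k (g k : nat) == N)%N _ mkstrat_subproof.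

Lemma alloc_mkstrat k : alloc mkstrat k = f k.
Proof. by rewrite /alloc /= ffunE inordK // ltnS leq_summand. Qed.

End Build.
End Strategies.

Section ConstantSum.
Variables (R : realType) (N K : nat).
Implicit Types (s t : strat N K) (p q : {ffun strat N K -> R}).

Definition gain (c v : nat) : R := (v < c)%:R + 1 / 2%:R * (c == v)%:R.

Lemma payoffE s t : payoff (1 : R) s t = \sum_k gain (alloc s k) (alloc t k).
Proof. by []. Qed.

Lemma gainC a b : gain a b + gain b a = 1.
Proof. by rewrite /gain; case: ltngtP => /= _; lra. Qed.

Lemma payoffC s t : payoff (1 : R) s t + payoff (1 : R) t s = K%:R.
Proof.
rewrite !payoffE -big_split /=.
by rewrite (eq_bigr (fun _ => 1)) ?sumr_const ?card_ord // => k _; rewrite gainC.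
Qed.

Definition payoff_vs p s : R := \sum_t p t * payoff (1 : R) s t.

Lemma exp_payA_vs q p : exp_payA 1 q p = \sum_s q s * payoff_vs p s.
Proof.
apply: eq_bigr => s _; rewrite mulr_sumr.
by apply: eq_bigr => t _; rewrite mulrA.
Qed.

Lemma exp_payB_vs p q : exp_payB 1 p q = \sum_t q t * payoff_vs p t.
Proof.
rewrite /exp_payB exchange_big; apply: eq_bigr => t _; rewrite mulr_sumr.
by apply: eq_bigr => s _; rewrite mulrCA mulrA.
Qed.

Lemma exp_pay_constant_sum p q :
  is_mixed p -> is_mixed q -> exp_payA 1 p q + exp_payB 1 p q = K%:R.
Proof.
move=> [_ p1] [_ q1]; rewrite /exp_payA /exp_payB -big_split /=.
transitivity (\sum_s \sum_t p s * q t * K%:R).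
  apply: eq_bigr => s _; rewrite -big_split /=; apply: eq_bigr => t _.
  by rewrite -mulrDr payoffC.
under eq_bigr => s _ do rewrite -mulr_suml -mulr_sumr q1 mulr1.
by rewrite -mulr_suml p1 mul1r.
Qed.

Lemma mixed_expect_le q (F : strat N K -> R) c :
  is_mixed q -> (forall s, F s <= c) -> \sum_s q s * F s <= c.
Proof.
move=> [q0 q1] Fc; rewrite -[c]mul1r -q1 mulr_suml.
by apply: ler_sum => s _; rewrite ler_wpM2l.
Qed.

Lemma mixed_expect_lt q (F : strat N K -> R) c s0 :
  is_mixed q -> (forall s, F s <= c) -> F s0 < c -> 0 < q s0 ->
  \sum_s q s * F s < c.
Proof.
move=> [q0 q1] Fc Fs0 qs0; rewrite -[c]mul1r -q1 mulr_suml.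
rewrite (bigD1 s0) //= [X in _ < X](bigD1 s0) //= ltr_leD ?ltr_pM2l //.
by apply: ler_sum => t _; rewrite ler_wpM2l.
Qed.

Variables (v : R) (mu : {ffun strat N K -> R}).
Hypotheses (vK : v + v = K%:R) (mu_mixed : is_mixed mu)
  (mu_guarantee : forall t, payoff_vs mu t <= v).

Lemma nash_of_guarantee : nash 1 mu mu.
Proof.
have muAB : exp_payA 1 mu mu = exp_payB 1 mu mu.
  by rewrite exp_payA_vs exp_payB_vs.
have muv : exp_payA 1 mu mu = v.
  by move: (exp_pay_constant_sum mu_mixed mu_mixed); rewrite -muAB -vK; lra.
split=> // [qA qAm|qB qBm].
  by rewrite muv exp_payA_vs; apply: mixed_expect_le.
by rewrite -muAB muv exp_payB_vs; apply: mixed_expect_le.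
Qed.

Lemma nash_support_guarantee (pA pB : {ffun strat N K -> R}) s :
  payoff_vs mu s < v -> nash 1 pA pB -> ~ (0 < pA s \/ 0 < pB s).
Proof.
move=> mus [pAm pBm devA devB] supp.
have := devA _ mu_mixed; have := devB _ mu_mixed.
have := exp_pay_constant_sum pAm pBm.
have := exp_pay_constant_sum mu_mixed pBm.
have := exp_pay_constant_sum pAm mu_mixed.
rewrite (exp_payA_vs pA mu) (exp_payB_vs mu pB) -vK.
have := mixed_expect_le pAm mu_guarantee.
have := mixed_expect_le pBm mu_guarantee.
case: supp => [pAs|pBs].
  by have := mixed_expect_lt pAm mu_guarantee mus pAs; lra.
by have := mixed_expect_lt pBm mu_guarantee mus pBs; lra.
Qed.

End ConstantSum.

Section UniformMixture.
Variables (R : realType) (T I : finType) (X : I -> T).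

Definition unif_mix : {ffun T -> R} := [ffun x => \sum_i (X i == x)%:R / #|I|%:R].

Lemma unif_mix_expect (F : T -> R) :
  \sum_x unif_mix x * F x = (\sum_i F (X i)) / #|I|%:R.
Proof.
under eq_bigr => x _ do rewrite ffunE mulr_suml.
rewrite exchange_big mulr_suml; apply: eq_bigr => i _ /=.
rewrite (bigD1 (X i)) //= eqxx big1 ?addr0 => [|x]; first by rewrite mul1r mulrC.
by rewrite eq_sym => /negbTE ->; rewrite !mul0r.
Qed.

Lemma unif_mix_ge0 x : 0 <= unif_mix x.
Proof. by rewrite ffunE; apply: sumr_ge0 => i _; rewrite divr_ge0. Qed.

Lemma unif_mix_gt0 i : 0 < unif_mix (X i).
Proof.
have I_gt0 : (0 < #|I|)%N by apply/card_gt0P; exists i.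
rewrite ffunE (bigD1 i) //= eqxx ltr_wpDr ?mul1r ?invr_gt0 ?ltr0n //.
by apply: sumr_ge0 => j _; rewrite divr_ge0.
Qed.

End UniformMixture.

Section UniformValue.
Variables (R : realType) (N K M : nat).

Lemma sum_gain n c :
  \sum_(v < n) gain R c v = (minn c n)%:R + 1 / 2%:R * (c < n)%:R.
Proof.
elim: n => [|n IHn]; first by rewrite big_ord0 minn0 mulr0 addr0.
rewrite big_ord_recr /= IHn /gain /minn ltnS.
by case: (ltngtP c n) => [|cn|->] /=; rewrite ?natrS; lra.
Qed.

Definition uniform_gain c := \sum_(v < M.+1) gain R c v.

Lemma uniform_gain_le c : uniform_gain c <= c%:R + 1 / 2%:R.
Proof.
rewrite /uniform_gain sum_gain /minn; case: ltnP => /= [_|Mc]; first lra.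
have : M.+1%:R <= c%:R :> R by rewrite ler_nat.
lra.
Qed.

Lemma uniform_gain_lt c : (M < c)%N -> uniform_gain c < c%:R + 1 / 2%:R.
Proof.
move=> Mc; rewrite /uniform_gain sum_gain /minn ltnS leqNgt Mc /=.
have : M.+1%:R <= c%:R :> R by rewrite ler_nat.
lra.
Qed.

Lemma sum_alloc_half (t : strat N K) :
  \sum_k ((alloc t k)%:R + 1 / 2%:R) = N%:R + K%:R / 2%:R :> R.
Proof.
rewrite big_split /= -natr_sum sum_alloc sumr_const card_ord -[_ *+ K]mulr_natr.
lra.
Qed.

Lemma sum_uniform_gain_le (t : strat N K) :
  \sum_k uniform_gain (alloc t k) <= N%:R + K%:R / 2%:R.
Proof. by rewrite -(sum_alloc_half t); apply: ler_sum => k _; apply: uniform_gain_le. Qed.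

Lemma sum_uniform_gain_lt (t : strat N K) k0 :
  (M < alloc t k0)%N -> \sum_k uniform_gain (alloc t k) < N%:R + K%:R / 2%:R.
Proof.
move=> Mk; rewrite -(sum_alloc_half t) (bigD1 k0) //= [X in _ < X](bigD1 k0) //=.
rewrite ltr_leD ?uniform_gain_lt //.
by apply: ler_sum => i _; apply: uniform_gain_le.
Qed.

Lemma is_mixed_unif_mix (I : finType) (X : I -> strat N K) :
  (0 < #|I|)%N -> is_mixed (unif_mix R X).
Proof.
move=> I_gt0; split; first exact: unif_mix_ge0.
rewrite -(eq_bigr _ (fun x _ => mulr1 (unif_mix R X x))) unif_mix_expect.
by rewrite sumr_const -mulr_natr mul1r divff // pnatr_eq0 -lt0n.
Qed.

Definition uniform_value (t : strat N K) : R :=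
  (\sum_k uniform_gain (alloc t k)) / M.+1%:R.

(* The last hypothesis says that every marginal of [X] is uniform on [0, M]. *)
Lemma payoff_vs_unif_mix (I : finType) (X : I -> strat N K) c :
  #|I| = (c * M.+1)%N -> (0 < c)%N ->
  (forall k (F : nat -> R), \sum_i F (alloc (X i) k) = (\sum_(v < M.+1) F v) *+ c) ->
  forall t, payoff_vs (unif_mix R X) t = uniform_value t.
Proof.
move=> cardI c_gt0 marginals t.
rewrite /payoff_vs unif_mix_expect.
under eq_bigr => i _ do rewrite payoffE.
rewrite exchange_big /=.
under eq_bigr => k _ do rewrite marginals.
rewrite sumrMnl cardI natrM -mulr_natr /uniform_value /uniform_gain.
by field; rewrite addrC natr1 !pnatr_eq0 -!lt0n c_gt0.
Qed.

End UniformValue.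

Section Halves.
Variables (R : realType) (h M : nat).

Definition join (l r : 'I_h -> nat) (k : 'I_(h + h)) : nat :=
  match split k with inl j => l j | inr j => r j end.

Lemma join_lshift l r j : join l r (lshift h j) = l j.
Proof. by rewrite /join (unsplitK (inl j)). Qed.

Lemma join_rshift l r j : join l r (rshift h j) = r j.
Proof. by rewrite /join (unsplitK (inr j)). Qed.

Lemma sum_join l r : (\sum_k join l r k = \sum_j l j + \sum_j r j)%N.
Proof.
rewrite big_split_ord; congr (_ + _)%N; apply: eq_bigr => j _.
  exact: join_lshift.
exact: join_rshift.
Qed.

(* Battlefields [j] and [h + j] share [M] soldiers: [rev_ord x = M - x]. *)
Definition mirror (x : 'I_h -> 'I_M.+1) := join (fun j => x j) (fun j => rev_ord (x j)).

Lemma sum_mirror x : (\sum_k mirror x k)%N = (h * M)%N.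
Proof.
rewrite sum_join -big_split /= (eq_bigr (fun _ => M)) ?sum_nat_const ?card_ord //.
by move=> j _; rewrite /= subSS subnKC // -ltnS.
Qed.

(* [x j + U] is computed in Z/(M+1). *)
Definition rotation x (U : 'I_M.+1) : strat (h * M) (h + h) :=
  mkstrat (sum_mirror (fun j => x j + U)).

Lemma rotation_marginal x k (F : nat -> R) :
  \sum_U F (alloc (rotation x U) k) = \sum_(v < M.+1) F v.
Proof.
under eq_bigr => U _ do rewrite alloc_mkstrat.
case: (split_ordP k) => j ->.
  under eq_bigr => U _ do rewrite /mirror join_lshift.
  by rewrite [RHS](reindex_inj (addrI (x j))).
under eq_bigr => U _ do rewrite /mirror join_rshift.
by rewrite [RHS](reindex_inj rev_ord_inj) [RHS](reindex_inj (addrI (x j))).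
Qed.

End Halves.

Section SupportedMixture.
Variables (R : realType) (h M : nat) (s : strat (h * M) (h + h)).
Hypothesis s_le : forall k, (alloc s k <= M)%N.

Let sL j := alloc s (lshift h j).
Let sR j := alloc s (rshift h j).

Definition dual_alloc := join (fun j => M - sR j)%N (fun j => M - sL j)%N.

Lemma sum_dual_alloc : (\sum_k dual_alloc k)%N = (h * M)%N.
Proof.
have sum_s := sum_alloc s; rewrite big_split_ord /= in sum_s.
rewrite sum_join !sumnB ?sum_nat_const ?card_ord // => [|j _|j _]; try exact: s_le.
by rewrite -sum_s addnK addKn.
Qed.

Definition dual : strat (h * M) (h + h) := mkstrat sum_dual_alloc.

Let xL j : 'I_M.+1 := inord (sL j).
Let xR j : 'I_M.+1 := inord (M - sR j).

(* [s] and [dual] have, battlefield by battlefield, the same pair of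
   allocations as the unrotated strategies [rotation xL 0] and
   [rotation xR 0], so exchanging them keeps all marginals uniform. *)
Definition supported_family (p : bool * 'I_M.+1) : strat (h * M) (h + h) :=
  if p.2 == ord0 then (if p.1 then dual else s)
  else rotation (if p.1 then xR else xL) p.2.

Lemma supported_family_marginal k (F : nat -> R) :
  \sum_p F (alloc (supported_family p) k) = (\sum_(v < M.+1) F v) *+ 2.
Proof.
have unrotated b : \sum_U F (alloc (supported_family (b, U)) k) =
    \sum_(v < M.+1) F v + F (alloc (if b then dual else s) k)
    - F (alloc (rotation (if b then xR else xL) ord0) k).
  rewrite -(rotation_marginal (if b then xR else xL) k F).
  rewrite (bigD1 ord0) // [in RHS](bigD1 ord0) //=.
  rewrite (eq_bigr (fun U => F (alloc (rotation (if b then xR else xL) U) k))).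
    by case: b; lra.
  by move=> U /negbTE U0; rewrite /supported_family /= U0.
have pairing : F (alloc dual k) + F (alloc s k) =
    F (alloc (rotation xR ord0) k) + F (alloc (rotation xL ord0) k).
  rewrite !alloc_mkstrat /dual_alloc /mirror.
  case: (split_ordP k) => j ->; rewrite ?join_lshift ?join_rshift !addr0 /xL /xR /sL /sR.
    by rewrite !inordK // ltnS ?leq_subr ?s_le.
  rewrite /= !inordK ?ltnS ?leq_subr ?s_le // !subSS subKn ?s_le //.
  by rewrite addrC.
rewrite -(pair_bigA _ (fun b U => F (alloc (supported_family (b, U)) k))).
rewrite big_bool /= !unrotated /= mulr2n; lra.
Qed.

Definition supported_mix : {ffun strat (h * M) (h + h) -> R} :=
  unif_mix R supported_family.

Lemma supported_mix_gt0 : 0 < supported_mix s.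
Proof. exact: (unif_mix_gt0 R supported_family (false, ord0)). Qed.

Lemma is_mixed_supported_mix : is_mixed supported_mix.
Proof. by apply: is_mixed_unif_mix; rewrite card_prod card_bool card_ord. Qed.

Lemma payoff_vs_supported_mix t :
  payoff_vs supported_mix t = uniform_value R M t.
Proof.
rewrite /supported_mix (payoff_vs_unif_mix (c := 2) _ isT supported_family_marginal) //.
by rewrite card_prod card_bool card_ord.
Qed.

End SupportedMixture.

Section Characterization.
Variables (R : realType) (h M : nat).

Lemma uniform_value_max :
  ((h * M)%N%:R + (h + h)%N%:R / 2%:R) / M.+1%:R = h%:R :> R.
Proof. by rewrite natrM natrD -natr1; field; rewrite addrC natr1 pnatr_eq0. Qed.

Lemma uniform_value_le (t : strat (h * M) (h + h)) : uniform_value R M t <= h%:R.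
Proof.
by rewrite -uniform_value_max ler_pM2r ?invr_gt0 ?ltr0Sn ?sum_uniform_gain_le.
Qed.

Lemma uniform_value_lt (t : strat (h * M) (h + h)) k :
  (M < alloc t k)%N -> uniform_value R M t < h%:R.
Proof.
move=> Mk; rewrite -uniform_value_max ltr_pM2r ?invr_gt0 ?ltr0Sn //.
exact: sum_uniform_gain_lt Mk.
Qed.

Lemma nash_support_iff (s : strat (h * M) (h + h)) :
  (exists pA pB : {ffun strat (h * M) (h + h) -> R},
      nash 1 pA pB /\ (0 < pA s \/ 0 < pB s))
  <-> (forall k, alloc s k <= M)%N.
Proof.
have hh : h%:R + h%:R = (h + h)%:R :> R by rewrite natrD.
split=> [[pA [pB [pApB supp]]] k | s_le].
  rewrite leqNgt; apply/negP => Mk.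
  pose X := @rotation h M (fun _ => ord0).
  have X_value t : payoff_vs (unif_mix R X) t = uniform_value R M t.
    apply: (payoff_vs_unif_mix (c := 1)) => // [|i F]; first by rewrite card_ord mul1n.
    by rewrite mulr1n rotation_marginal.
  apply: (nash_support_guarantee (mu := unif_mix R X) hh _ _ _ pApB supp).
  - by apply: is_mixed_unif_mix; rewrite card_ord.
  - by move=> t; rewrite X_value uniform_value_le.
  - by rewrite X_value (uniform_value_lt Mk).
exists (supported_mix R s_le), (supported_mix R s_le).
split; last by left; exact: supported_mix_gt0.
apply: (nash_of_guarantee hh (is_mixed_supported_mix R s_le)) => t.
by rewrite payoff_vs_supported_mix uniform_value_le.
Qed.

End Characterization.

Theorem corollary4 (R : realType) (N K : nat)
  (hN : (1 <= N)%N) (hK : (2 <= K)%N) (hKeven : ~~ odd K) (hdiv : (K %| N)%N)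
  (s : strat N K) :
  (exists pA pB : {ffun strat N K -> R},
      nash 1 pA pB /\ (0 < pA s \/ 0 < pB s))
  <-> (forall k : 'I_K, (alloc s k <= (2 * N) %/ K)%N).
Proof.
have [h K_hh] : exists h, K = (h + h)%N.
  by exists K./2; rewrite addnn -[LHS]odd_double_half (negbTE hKeven).
have [m N_mK] := dvdnP hdiv.
have N_hM : N = (h * (2 * m))%N by rewrite N_mK K_hh; ring.
subst K; clear N_mK; subst N.
have -> : (2 * (h * (2 * m)) = 2 * m * (h + h))%N by ring.
rewrite mulnK; last lia.
exact: nash_support_iff.
Qed.
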